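(* Let $k\geq 2$ and $n\geq 2t\geq 2$ be integers. Let $B_k(n,t)$ be the number of length-$n$ words over $\Sigma_k$ that have a unique border, this border having length $t$. Then \[\frac{B_k(n,t)}{k^n}\leq \frac{1}{k^t}.\]
   Context: $\Sigma_k=\{0,1,\ldots,k-1\}$. A border of a word $w$ is a non-empty word that is both a proper prefix and a proper suffix of $w$. A word has a unique border if it has exactly one border. *)

From mathcomp Require Import all_boot all_order all_algebra.
Set Implicit Arguments. Unset Strict Implicit. Unset Printing Implicit Defensive.

(* Words of length n over Sigma_k = {0,...,k-1} are n.-tuple 'I_k. *)

Definition is_border (T : eqType) (u w : seq T) : bool :=
  [&& 0 < size u, size u < size w, prefix u w & suffix u w].

(* All borders of w: every border is a prefix of w, so filtering the prefixes
   take l w (0 <= l <= |w|) by is_border lists each border exactly once. *)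
Definition borders (T : eqType) (w : seq T) : seq (seq T) :=
  [seq u <- [seq take l w | l <- iota 0 (size w).+1] | is_border u w].

Definition Bk (k n t : nat) : nat :=
  #|[set w : n.-tuple 'I_k |
     (size (borders w) == 1) && (size (head [::] (borders w)) == t)]|.

From mathcomp Require Import all_boot all_order all_algebra.
From mathcomp Require Import zify.
Import GRing.Theory Num.Theory.
Local Open Scope ring_scope.

(* A word whose only border has length t has, in particular, its length-t
   prefix equal to its length-t suffix. When 2t <= n such a word is determined
   by its last n - t letters (the first t of them repeat at the end), so there
   are at most k^(n-t) of them among the k^n words of length n. *)

Lemma mem_borders_take_drop (T : eqType) (u w : seq T) :
  u \in borders w -> take (size u) w = drop (size w - size u) w.
Proof.
rewrite mem_filter => /andP [/and4P [_ _ pre_uw suf_uw] _].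
rewrite prefixE in pre_uw; rewrite suffixE in suf_uw.
by rewrite (eqP pre_uw) (eqP suf_uw).
Qed.

Lemma card_take_eq_drop (T : finType) (n t : nat) : (2 * t <= n)%N ->
  (#|[set w : n.-tuple T | take t w == drop (n - t) w]| <= #|T| ^ (n - t))%N.
Proof.
move=> le2tn; set W := [set w | _].
have recover w : w \in W -> tval w = drop (n - 2 * t) (drop t w) ++ drop t w.
  rewrite inE => /eqP take_drop.
  have drop_n_t : (n - 2 * t + t = n - t)%N by lia.
  by rewrite drop_drop drop_n_t -take_drop cat_take_drop.
rewrite -(card_in_imset (f := fun w : n.-tuple T => [tuple of drop t w])).
  by rewrite -card_tuple max_card.
move=> w1 w2 w1W w2W /(congr1 val) /= eq_drop.
by apply: val_inj; rewrite /= (recover w1) // (recover w2) // eq_drop.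
Qed.

Lemma Bk_mul_le (k n t : nat) : (2 * t <= n)%N -> (Bk k n t * k ^ t <= k ^ n)%N.
Proof.
move=> le2tn.
have -> : (k ^ n = k ^ (n - t) * k ^ t)%N by rewrite -expnD subnK //; lia.
rewrite leq_mul2r; apply/orP; right.
have := card_take_eq_drop 'I_k _ _ le2tn; rewrite card_ord; apply: leq_trans.
apply: subset_leq_card; apply/subsetP => w; rewrite !inE.
case E: (borders w) => [|u s] //= /andP [_ /eqP size_u].
have /mem_borders_take_drop : u \in borders w by rewrite E mem_head.
by rewrite size_u size_tuple => ->.
Qed.

Theorem lemma11 (k n t : nat) (hk : (2 <= k)%N) (ht : (1 <= t)%N) (hn : (2 * t <= n)%N) :
  (Bk k n t)%:R / (k%:R ^+ n) <= 1 / (k%:R ^+ t) :> rat.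
Proof.
have k_gt0 : (0 : rat) < k%:R by rewrite ltr0n; lia.
rewrite ler_pdivrMr ?exprn_gt0 // mul1r mulrC ler_pdivlMr ?exprn_gt0 //.
by rewrite -!natrX -natrM ler_nat Bk_mul_le.
Qed.
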